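(* For $p=(x,y)\in\mathbb{R}^2_{x<y}:=\{(x,y)\in\mathbb{R}^2\mid x<y\}$ set $\lambda(p):=\dfrac{y-x}{2\|(1,x,y)\|_2}$. For every $K>0$ and every $\alpha\ge 1$, the functions \[ \widetilde{\omega}(p)=\lambda(p)^\alpha,\qquad \omega_K(p)=\frac{2}{\pi}\arctan\!\left(\frac{\lambda(p)^\alpha}{K^\alpha}\right) \] are stable weightings. Moreover, for $\alpha=1$ both $\widetilde{\omega}$ and $\omega_K$ are effective weightings.
   Context: Notation: for $p=(x,y)\in\mathbb{R}^2$ write $(1,p):=(1,x,y)\in\mathbb{R}^3$; $\Delta:=\{(x,y)\mid x=y\}$ and $\|p-\Delta\|_\infty=\frac{y-x}{2}$ for $p\in\mathbb{R}^2_{x<y}$. $B_r=\{p\in\mathbb{R}^2:\|p\|_2\le r\}$, $B_r^c=\mathbb{R}^2\setminus B_r$. A persistence diagram (PD) is a measure $\mu_D=\sum_{p\in D}c_p\delta_p$ with $D\subset\mathbb{R}^2_{x<y}$ finite and $c_p\in\mathbb{N}$. For a measure $\mu$ and $Z\subset\mathbb{R}^2$, $\mathrm{pers}_Z(\mu)=\frac12\int_Z(y-x)\,d\mu((x,y))$. For a weighting $\omega$ (a function with values in $(0,1]$ on the points of diagrams), set $\Gamma_\omega(p):=\omega(p)(1,p)\in\mathbb{R}^3$. A stable weighting is a function $\omega$ with values in $(0,1]$ such that (i) $\Gamma_\omega$ is $C$-Lipschitz (Euclidean norms) for some $C>0$, and (ii) there is $C'>0$ with $\|\Gamma_\omega(p)\|_2\le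 C'\frac{y-x}{2}=C'\|p-\Delta\|_\infty$ for every $p=(x,y)\in\mathbb{R}^2_{x<y}$. An effective weighting is a function $\omega$ with values in $(0,1]$ such that for every sequence of PDs $\{\mu_{D_n}\}_{n\in\mathbb{N}}$: if $\lim_{r\to\infty}\sup_n\int_{B_r^c}\omega(p)\|p\|_2\,d\mu_{D_n}(p)=0$, then $\lim_{r\to\infty}\sup_n\mathrm{pers}_{B_r^c}(\mu_{D_n})=0$. *)

From Stdlib Require Import Reals Lra List.
Open Scope R_scope.

Definition pt := (R * R)%type.

Definition norm2 (p : pt) : R := sqrt (fst p ^ 2 + snd p ^ 2).
Definition norm3 (a b c : R) : R := sqrt (a ^ 2 + b ^ 2 + c ^ 2).

Definition lam (p : pt) : R := (snd p - fst p) / (2 * norm3 1 (fst p) (snd p)).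

Definition omega_tilde (alpha : R) (p : pt) : R := Rpower (lam p) alpha.
Definition omega_K (K alpha : R) (p : pt) : R :=
  2 / PI * atan (Rpower (lam p) alpha / Rpower K alpha).

(* Upper half plane R^2_{x<y}: the points of persistence diagrams. *)
Definition upper (p : pt) : Prop := fst p < snd p.

Definition is_weighting (w : pt -> R) : Prop :=
  forall p, upper p -> 0 < w p <= 1.

(* ||Gamma_w(p) - Gamma_w(q)||_2 where Gamma_w(p) = w(p) (1, x, y). *)
Definition Gamma_dist (w : pt -> R) (p q : pt) : R :=
  norm3 (w p - w q) (w p * fst p - w q * fst q) (w p * snd p - w q * snd q).
Definition Gamma_norm (w : pt -> R) (p : pt) : R :=
  norm3 (w p) (w p * fst p) (w p * snd p).

Definition stable_weighting (w : pt -> R) : Prop :=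
  is_weighting w /\
  (exists C, 0 < C /\ forall p q, upper p -> upper q ->
      Gamma_dist w p q <= C * norm2 (fst p - fst q, snd p - snd q)) /\
  (exists C', 0 < C' /\ forall p, upper p ->
      Gamma_norm w p <= C' * ((snd p - fst p) / 2)).

(* A persistence diagram mu_D = sum_{p in D} c_p delta_p, represented as a
   finite list of points of R^2_{x<y}, each point repeated c_p times. *)
Definition is_PD (D : list pt) : Prop := Forall upper D.

(* int_{B_r^c} f d mu_D, where B_r^c = {p : ||p||_2 > r}. *)
Fixpoint int_out (D : list pt) (r : R) (f : pt -> R) : R :=
  match D with
  | nil => 0
  | p :: D' => (if Rlt_dec r (norm2 p) then f p else 0) + int_out D' r f
  end.

Definition pers_out (D : list pt) (r : R) : R :=
  / 2 * int_out D r (fun p => snd p - fst p).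

(* lim_{r -> oo} sup_n F n r = 0, for nonnegative F (sup in [0, +oo]):
   written out, for every eps > 0, eventually in r, every F n r <= eps. *)
Definition lim_sup_zero (F : nat -> R -> R) : Prop :=
  forall eps, 0 < eps -> exists R0, forall r, R0 <= r -> forall n, F n r <= eps.

Definition effective_weighting (w : pt -> R) : Prop :=
  is_weighting w /\
  forall D : nat -> list pt, (forall n, is_PD (D n)) ->
    lim_sup_zero (fun n r => int_out (D n) r (fun p => w p * norm2 p)) ->
    lim_sup_zero (fun n r => pers_out (D n) r).

From Stdlib Require Import Reals Lra Psatz.
Open Scope R_scope.

(* Both weightings are g o lam with 0 < g <= 1, g Lipschitz on (0,1) and g s <= C s.
   Since lam(p) |(1,p)| = (y - x)/2, the bound |Gamma(p)| <= C (y - x)/2 is immediate;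
   writing Gamma(p) - Gamma(q) = w(p) (0, p - q) + (w(p) - w(q)) (1, q), the Lipschitz
   bound reduces to |lam p - lam q| |(1,q)| <= 2 |p - q| whenever |(1,q)| <= |(1,p)|.
   For effectiveness, y - x <= 4 lam(p) |p| once |p| >= 1, and for alpha = 1 both
   weightings dominate a multiple of lam (atan t >= t/(1+t)), so the persistence outside
   B_r is bounded by a multiple of the weighted integral outside B_r. *)

Lemma norm3_ge0 a b c : 0 <= norm3 a b c.
Proof. apply sqrt_pos. Qed.

Lemma norm3_sqr a b c : norm3 a b c ^ 2 = a ^ 2 + b ^ 2 + c ^ 2.
Proof. apply pow2_sqrt; nra. Qed.

Lemma norm3_le a b c M : 0 <= M -> a ^ 2 + b ^ 2 + c ^ 2 <= M ^ 2 -> norm3 a b c <= M.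
Proof. intros HM H; rewrite <- (sqrt_pow2 M HM); apply sqrt_le_1_alt, H. Qed.

Lemma Rabs_le_norm3_2 a b c : Rabs b <= norm3 a b c.
Proof. rewrite <- sqrt_Rsqr_abs; apply sqrt_le_1_alt; unfold Rsqr; nra. Qed.

Lemma Rabs_le_norm3_3 a b c : Rabs c <= norm3 a b c.
Proof. rewrite <- sqrt_Rsqr_abs; apply sqrt_le_1_alt; unfold Rsqr; nra. Qed.

Lemma norm3_cauchy_schwarz a1 b1 c1 a2 b2 c2 :
  a1 * a2 + b1 * b2 + c1 * c2 <= norm3 a1 b1 c1 * norm3 a2 b2 c2.
Proof.
  unfold norm3; rewrite <- sqrt_mult by nra.
  apply Rle_trans with (Rabs (a1 * a2 + b1 * b2 + c1 * c2)); [apply Rle_abs|].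
  rewrite <- sqrt_Rsqr_abs; apply sqrt_le_1_alt; unfold Rsqr.
  assert (Lagrange : (a1 ^ 2 + b1 ^ 2 + c1 ^ 2) * (a2 ^ 2 + b2 ^ 2 + c2 ^ 2)
    = (a1 * a2 + b1 * b2 + c1 * c2) ^ 2
      + ((a1 * b2 - a2 * b1) ^ 2 + (a1 * c2 - a2 * c1) ^ 2 + (b1 * c2 - b2 * c1) ^ 2))
    by ring.
  assert (0 <= (a1 * b2 - a2 * b1) ^ 2 + (a1 * c2 - a2 * c1) ^ 2 + (b1 * c2 - b2 * c1) ^ 2)
    by (repeat apply Rplus_le_le_0_compat; apply pow2_ge_0).
  nra.
Qed.

Lemma norm3_triangle a1 b1 c1 a2 b2 c2 :
  norm3 (a1 + a2) (b1 + b2) (c1 + c2) <= norm3 a1 b1 c1 + norm3 a2 b2 c2.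
Proof.
  pose proof (norm3_cauchy_schwarz a1 b1 c1 a2 b2 c2).
  pose proof (norm3_sqr a1 b1 c1); pose proof (norm3_sqr a2 b2 c2).
  pose proof (norm3_ge0 a1 b1 c1); pose proof (norm3_ge0 a2 b2 c2).
  apply norm3_le; nra.
Qed.

Lemma norm3_scal s a b c : norm3 (s * a) (s * b) (s * c) = Rabs s * norm3 a b c.
Proof.
  unfold norm3; rewrite <- sqrt_Rsqr_abs, <- sqrt_mult by (unfold Rsqr; nra).
  f_equal; unfold Rsqr; ring.
Qed.

Lemma norm2_norm3 a b : norm2 (a, b) = norm3 0 a b.
Proof. unfold norm2, norm3; simpl; f_equal; ring. Qed.

Lemma norm2_sqr p : norm2 p ^ 2 = fst p ^ 2 + snd p ^ 2.
Proof. apply pow2_sqrt; nra. Qed.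

Lemma norm3_1_gt0 x y : 0 < norm3 1 x y.
Proof. apply sqrt_lt_R0; nra. Qed.

Lemma Rabs_sub_le_of_derive_bound f f' L a b :
  (forall c, Rmin a b <= c <= Rmax a b ->
     derivable_pt_lim f c (f' c) /\ Rabs (f' c) <= L) ->
  Rabs (f a - f b) <= L * Rabs (a - b).
Proof.
  intros H; rewrite Rabs_minus_sym, (Rabs_minus_sym a).
  destruct (MVT_abs f f' a b) as [c [-> Hc]]; [intros c Hc; apply H, Hc|].
  apply Rmult_le_compat_r; [apply Rabs_pos | apply H, Hc].
Qed.

Lemma Rpower_gt0 s a : 0 < Rpower s a.
Proof. apply exp_pos. Qed.

Lemma Rpower_le_1 s a : 0 < s <= 1 -> 0 <= a -> Rpower s a <= 1.
Proof.
  intros Hs Ha; apply Rle_trans with (Rpower 1 a); [apply Rle_Rpower_l; lra|].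
  unfold Rpower; rewrite ln_1, Rmult_0_r, exp_0; lra.
Qed.

Lemma Rpower_le_self s a : 0 < s <= 1 -> 1 <= a -> Rpower s a <= s.
Proof.
  intros Hs Ha; replace a with (1 + (a - 1)) by ring.
  rewrite Rpower_plus, Rpower_1 by lra.
  pose proof (Rpower_le_1 s (a - 1) Hs ltac:(lra)); nra.
Qed.

Lemma Rpower_lipschitz a s t : 1 <= a -> 0 < s <= 1 -> 0 < t <= 1 ->
  Rabs (Rpower s a - Rpower t a) <= a * Rabs (s - t).
Proof.
  intros Ha Hs Ht.
  apply (Rabs_sub_le_of_derive_bound (fun x => Rpower x a) (fun x => a * Rpower x (a - 1))).
  intros c Hc.
  assert (Hc01 : 0 < c <= 1).
  { split; [apply Rlt_le_trans with (Rmin s t); [apply Rmin_glb_lt|]|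
            apply Rle_trans with (Rmax s t); [|apply Rmax_lub]]; lra. }
  split; [apply derivable_pt_lim_power; lra|].
  pose proof (Rpower_gt0 c (a - 1)); pose proof (Rpower_le_1 c (a - 1) Hc01 ltac:(lra)).
  rewrite Rabs_pos_eq; nra.
Qed.

Lemma atan_gt0 t : 0 < t -> 0 < atan t.
Proof. intros; rewrite <- atan_0; apply atan_increasing; lra. Qed.

Lemma atan_lipschitz s t : Rabs (atan s - atan t) <= Rabs (s - t).
Proof.
  rewrite <- (Rmult_1_l (Rabs (s - t))).
  apply (Rabs_sub_le_of_derive_bound atan (fun x => / (1 + x ^ 2))).
  intros c _; split; [apply derivable_pt_lim_atan|].
  rewrite Rabs_pos_eq by (left; apply Rinv_0_lt_compat; nra).
  rewrite <- Rinv_1; apply Rinv_le_contravar; nra.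
Qed.

Lemma atan_le_id t : 0 <= t -> atan t <= t.
Proof.
  intros Ht; pose proof (atan_lipschitz t 0) as Hlip.
  rewrite atan_0, !Rminus_0_r, (Rabs_pos_eq t) in Hlip by lra.
  pose proof (Rle_abs (atan t)); lra.
Qed.

Lemma atan_ge_div_1_add t : 0 < t -> t / (1 + t) <= atan t.
Proof.
  intros Ht; pose proof (sin_lt_x (atan t) (atan_gt0 t Ht)) as Hsin.
  rewrite sin_atan in Hsin.
  assert (Hsq : 0 < sqrt (1 + t²) <= 1 + t).
  { unfold Rsqr; split; [apply sqrt_lt_R0; nra|].
    rewrite <- (sqrt_pow2 (1 + t)) by lra; apply sqrt_le_1_alt; nra. }
  apply Rle_trans with (t / sqrt (1 + t²)); [|lra].
  apply Rmult_le_compat_l; [lra|]; apply Rinv_le_contravar; lra.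
Qed.

Lemma lam_bounds p : upper p -> 0 < lam p < 1.
Proof.
  destruct p as [x y]; unfold upper, lam; simpl; intros Hxy.
  pose proof (norm3_1_gt0 x y); pose proof (norm3_sqr 1 x y).
  split; [apply Rdiv_lt_0_compat; lra|].
  apply (Rmult_lt_reg_r (2 * norm3 1 x y)); [lra|].
  unfold Rdiv; rewrite Rmult_assoc, Rinv_l, Rmult_1_l, Rmult_1_r by lra.
  destruct (Rlt_or_le (y - x) (2 * norm3 1 x y)) as [|Hge]; [lra|].
  (* (y - x)^2 <= 2 (x^2 + y^2) < 4 (1 + x^2 + y^2) *)
  assert (2 * norm3 1 x y * (2 * norm3 1 x y) <= (y - x) * (y - x))
    by (apply Rmult_le_compat; lra).
  nra.
Qed.

Lemma lam_mul_norm3 p : lam p * norm3 1 (fst p) (snd p) = (snd p - fst p) / 2.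
Proof. unfold lam; pose proof (norm3_1_gt0 (fst p) (snd p)); field; lra. Qed.

Lemma lam_sub_mul_norm3 p q : upper p ->
  norm3 1 (fst q) (snd q) <= norm3 1 (fst p) (snd p) ->
  Rabs (lam p - lam q) * norm3 1 (fst q) (snd q)
    <= 2 * norm2 (fst p - fst q, snd p - snd q).
Proof.
  intros Hp HN; pose proof (lam_bounds p Hp).
  pose proof (lam_mul_norm3 p); pose proof (lam_mul_norm3 q).
  destruct p as [xp yp], q as [xq yq]; simpl in *.
  rewrite norm2_norm3.
  assert (Htri : norm3 1 xp yp <= norm3 1 xq yq + norm3 0 (xp - xq) (yp - yq)).
  { replace (norm3 1 xp yp) with (norm3 (1 + 0) (xq + (xp - xq)) (yq + (yp - yq)))
      by (f_equal; ring).
    apply norm3_triangle. }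
  pose proof (Rabs_le_norm3_2 0 (xp - xq) (yp - yq)).
  pose proof (Rabs_le_norm3_3 0 (xp - xq) (yp - yq)).
  pose proof (norm3_1_gt0 xq yq).
  set (D := norm3 0 (xp - xq) (yp - yq)) in *.
  set (Np := norm3 1 xp yp) in *; set (Nq := norm3 1 xq yq) in *.
  pose proof (Rle_abs (xp - xq)); pose proof (Rle_abs (- (xp - xq))).
  pose proof (Rle_abs (yp - yq)); pose proof (Rle_abs (- (yp - yq))).
  rewrite Rabs_Ropp in *.
  (* (lam p - lam q) Nq = ((yp - yq) - (xp - xq)) / 2 - lam p (Np - Nq) *)
  rewrite <- (Rabs_pos_eq Nq), <- Rabs_mult by lra.
  apply Rabs_le; split; nra.
Qed.

Lemma lam_mul_norm2_ge p : upper p -> 1 <= norm2 p -> snd p - fst p <= 4 * (lam p * norm2 p).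
Proof.
  intros Hp H1; pose proof (lam_bounds p Hp); pose proof (lam_mul_norm3 p).
  pose proof (norm2_sqr p).
  assert (norm3 1 (fst p) (snd p) <= 2 * norm2 p) by (apply norm3_le; nra).
  nra.
Qed.

Lemma Gamma_dist_sym w p q : Gamma_dist w p q = Gamma_dist w q p.
Proof. unfold Gamma_dist, norm3; f_equal; ring. Qed.

Lemma Gamma_dist_le w p q :
  Gamma_dist w p q <= Rabs (w p) * norm2 (fst p - fst q, snd p - snd q)
                      + Rabs (w p - w q) * norm3 1 (fst q) (snd q).
Proof.
  rewrite norm2_norm3, <- !norm3_scal; unfold Gamma_dist.
  replace (w p - w q) with (w p * 0 + (w p - w q) * 1) at 1 by ring.
  replace (w p * fst p - w q * fst q) with (w p * (fst p - fst q) + (w p - w q) * fst q)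
    by ring.
  replace (w p * snd p - w q * snd q) with (w p * (snd p - snd q) + (w p - w q) * snd q)
    by ring.
  apply norm3_triangle.
Qed.

Lemma Gamma_norm_eq w p : Gamma_norm w p = Rabs (w p) * norm3 1 (fst p) (snd p).
Proof. rewrite <- norm3_scal, Rmult_1_r; reflexivity. Qed.

Lemma stable_weighting_comp_lam (g : R -> R) L C :
  0 <= L -> 0 < C ->
  (forall s, 0 < s < 1 -> 0 < g s <= 1) ->
  (forall s t, 0 < s < 1 -> 0 < t < 1 -> Rabs (g s - g t) <= L * Rabs (s - t)) ->
  (forall s, 0 < s < 1 -> g s <= C * s) ->
  stable_weighting (fun p => g (lam p)).
Proof.
  intros HL HC Hrange Hlip Hlin.
  assert (Hw : forall p, upper p -> 0 < g (lam p) <= 1)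
    by (intros; apply Hrange, lam_bounds; auto).
  split; [exact Hw | split].
  - exists (1 + 2 * L); split; [lra|].
    assert (Hmain : forall p q, upper p -> upper q ->
      norm3 1 (fst q) (snd q) <= norm3 1 (fst p) (snd p) ->
      Gamma_dist (fun p => g (lam p)) p q
        <= (1 + 2 * L) * norm2 (fst p - fst q, snd p - snd q)).
    { intros p q Hp Hq HN.
      eapply Rle_trans; [apply Gamma_dist_le|]; cbv beta.
      pose proof (Hlip _ _ (lam_bounds p Hp) (lam_bounds q Hq)).
      pose proof (lam_sub_mul_norm3 p q Hp HN).
      pose proof (norm3_1_gt0 (fst q) (snd q)).
      pose proof (sqrt_pos ((fst p - fst q) ^ 2 + (snd p - snd q) ^ 2)).
      rewrite (Rabs_pos_eq (g (lam p))) by (pose proof (Hw p Hp); lra).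
      pose proof (Hw p Hp); unfold norm2 in *; simpl in *.
      nra. }
    intros p q Hp Hq.
    destruct (Rle_or_lt (norm3 1 (fst q) (snd q)) (norm3 1 (fst p) (snd p))) as [HN|HN].
    + apply Hmain; auto.
    + rewrite Gamma_dist_sym.
      replace (norm2 (fst p - fst q, snd p - snd q)) with (norm2 (fst q - fst p, snd q - snd p))
        by (unfold norm2; simpl; f_equal; ring).
      apply Hmain; auto; lra.
  - exists C; split; [exact HC|]. intros p Hp.
    rewrite Gamma_norm_eq, <- lam_mul_norm3.
    pose proof (Hw p Hp); pose proof (Hlin _ (lam_bounds p Hp)).
    pose proof (norm3_1_gt0 (fst p) (snd p)).
    rewrite Rabs_pos_eq by lra; nra.
Qed.

Lemma int_out_le D r f g c : is_PD D -> 1 <= r ->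
  (forall p, upper p -> 1 <= norm2 p -> f p <= c * g p) ->
  int_out D r f <= c * int_out D r g.
Proof.
  intros HD Hr Hfg; induction HD as [|p D Hp _ IH]; simpl; [lra|].
  rewrite Rmult_plus_distr_l; apply Rplus_le_compat; [|exact IH].
  destruct (Rlt_dec r (norm2 p)); [apply Hfg; auto; lra | lra].
Qed.

Lemma effective_weighting_of_lam_le w c : 0 < c -> is_weighting w ->
  (forall p, upper p -> 1 <= norm2 p -> lam p <= c * w p) ->
  effective_weighting w.
Proof.
  intros Hc Hw Hlam; split; [exact Hw|].
  intros D HD Hlim eps Heps.
  destruct (Hlim (eps / (2 * c))) as [R0 HR0]; [apply Rdiv_lt_0_compat; lra|].
  exists (Rmax R0 1); intros r Hr n; unfold pers_out.
  assert (Hpers : forall p, upper p -> 1 <= norm2 p ->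
            snd p - fst p <= 4 * c * (w p * norm2 p)).
  { intros p Hp H1; pose proof (lam_mul_norm2_ge p Hp H1).
    pose proof (Hlam p Hp H1); pose proof (sqrt_pos (fst p ^ 2 + snd p ^ 2)).
    unfold norm2 in *; nra. }
  pose proof (int_out_le (D n) r _ _ _ (HD n) (Rle_trans _ _ _ (Rmax_r _ _) Hr) Hpers).
  pose proof (HR0 r (Rle_trans _ _ _ (Rmax_l _ _) Hr) n) as Hsmall; cbv beta in Hsmall.
  apply Rle_trans with (/ 2 * (4 * c * (eps / (2 * c)))); [nra|].
  right; field; lra.
Qed.

Lemma stable_weighting_omega_tilde a : 1 <= a -> stable_weighting (omega_tilde a).
Proof.
  intros Ha; apply (stable_weighting_comp_lam (fun s => Rpower s a) a 1); try lra.
  - intros s Hs; split; [apply Rpower_gt0 | apply Rpower_le_1; lra].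
  - intros s t Hs Ht; apply Rpower_lipschitz; lra.
  - intros s Hs; pose proof (Rpower_le_self s a ltac:(lra) Ha); lra.
Qed.

Lemma stable_weighting_omega_K K a : 0 < K -> 1 <= a -> stable_weighting (omega_K K a).
Proof.
  intros HK Ha; pose proof PI_RGT_0.
  pose proof (Rpower_gt0 K a); set (k := Rpower K a) in *.
  assert (Hc : 0 < 2 / PI / k) by (apply Rdiv_lt_0_compat; [apply Rdiv_lt_0_compat|]; lra).
  apply (stable_weighting_comp_lam (fun s => 2 / PI * atan (Rpower s a / k))
           (2 / PI / k * a) (2 / PI / k)); [nra | exact Hc | ..].
  - intros s Hs; pose proof (atan_bound (Rpower s a / k)).
    assert (0 < atan (Rpower s a / k))
      by (apply atan_gt0, Rdiv_lt_0_compat; [apply Rpower_gt0 | lra]).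
    split; [apply Rmult_lt_0_compat; [apply Rdiv_lt_0_compat|]; lra|].
    replace 1 with (2 / PI * (PI / 2)) by (field; lra).
    apply Rmult_le_compat_l; [left; apply Rdiv_lt_0_compat |]; lra.
  - intros s t Hs Ht.
    assert (Hdiff : Rabs (Rpower s a / k - Rpower t a / k) <= / k * (a * Rabs (s - t))).
    { replace (Rpower s a / k - Rpower t a / k) with (/ k * (Rpower s a - Rpower t a))
        by (field; lra).
      rewrite Rabs_mult, Rabs_pos_eq by (left; apply Rinv_0_lt_compat; lra).
      apply Rmult_le_compat_l; [left; apply Rinv_0_lt_compat; lra|].
      apply Rpower_lipschitz; lra. }
    pose proof (atan_lipschitz (Rpower s a / k) (Rpower t a / k)).
    rewrite <- Rmult_minus_distr_l, Rabs_mult, Rabs_pos_eq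
      by (left; apply Rdiv_lt_0_compat; lra).
    replace (2 / PI / k * a * Rabs (s - t)) with (2 / PI * (/ k * (a * Rabs (s - t))))
      by (field; lra).
    apply Rmult_le_compat_l; [left; apply Rdiv_lt_0_compat |]; lra.
  - intros s Hs.
    pose proof (Rpower_le_self s a ltac:(lra) Ha).
    pose proof (atan_le_id (Rpower s a / k)
                  ltac:(apply Rlt_le, Rdiv_lt_0_compat; [apply Rpower_gt0 | lra])).
    unfold Rdiv in *.
    assert (0 < / PI) by (apply Rinv_0_lt_compat; lra).
    assert (0 < / k) by (apply Rinv_0_lt_compat; lra).
    nra.
Qed.

Lemma effective_weighting_omega_tilde : effective_weighting (omega_tilde 1).
Proof.
  apply (effective_weighting_of_lam_le _ 1);
    [lra | apply (proj1 (stable_weighting_omega_tilde 1 (Rle_refl 1)))|].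
  intros p Hp _; unfold omega_tilde; rewrite Rpower_1 by apply lam_bounds, Hp; lra.
Qed.

Lemma effective_weighting_omega_K K : 0 < K -> effective_weighting (omega_K K 1).
Proof.
  intros HK; pose proof PI_RGT_0.
  apply (effective_weighting_of_lam_le _ (PI * (K + 1) / 2));
    [nra | apply (proj1 (stable_weighting_omega_K K 1 HK (Rle_refl 1)))|].
  intros p Hp _; unfold omega_K; pose proof (lam_bounds p Hp).
  rewrite !Rpower_1 by lra.
  (* atan (lam / K) >= lam / (K + lam) >= lam / (K + 1) *)
  pose proof (atan_ge_div_1_add (lam p / K) ltac:(apply Rdiv_lt_0_compat; lra)) as Hatan.
  replace (lam p / K / (1 + lam p / K)) with (lam p / (K + lam p)) in Hatan by (field; lra).
  assert (lam p / (K + 1) <= lam p / (K + lam p))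
    by (apply Rmult_le_compat_l; [|apply Rinv_le_contravar]; lra).
  replace (PI * (K + 1) / 2 * (2 / PI * atan (lam p / K))) with ((K + 1) * atan (lam p / K))
    by (field; lra).
  replace (lam p) with ((K + 1) * (lam p / (K + 1))) at 1 by (field; lra).
  apply Rmult_le_compat_l; lra.
Qed.

Theorem mainTheorem1 :
  forall K alpha : R, 0 < K -> 1 <= alpha ->
    stable_weighting (omega_tilde alpha) /\
    stable_weighting (omega_K K alpha) /\
    (alpha = 1 ->
       effective_weighting (omega_tilde alpha) /\
       effective_weighting (omega_K K alpha)).
Proof.
  intros K alpha HK Halpha.
  split; [apply stable_weighting_omega_tilde, Halpha|].
  split; [apply stable_weighting_omega_K; assumption|].
  intros ->; split; [apply effective_weighting_omega_tilde | apply effective_weighting_omega_K, HK].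
Qed.
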